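(* Let $\mathcal C\subseteq\mathcal L_{n,q}$ be an $\mathbb F_{q^n}$-linear code of dimension $k$. Then $(\mathcal C^{[i]})^{\perp}=(\mathcal C^{\perp})^{[i]}$ for each $i\in\{0,\ldots,n-1\}$. Consequently $h(\mathcal C^\perp)=n-2k+h(\mathcal C)$.
   Context: $q$ is a prime power, $[i]:=q^i$. $\mathcal L_{n,q}$ is the $\mathbb F_{q^n}$-vector space of linearized polynomials $f(x)=\sum_{i=0}^{n-1}f_ix^{[i]}$, $f_i\in\mathbb F_{q^n}$. For $f(x)=\sum_i f_ix^{[i]}$, $f(x)^{[j]}:=x^{[j]}\circ f(x)=\sum_i f_i^{[j]}x^{[(i+j)\bmod n]}$, and $\mathcal C^{[j]}=\{f^{[j]}\colon f\in\mathcal C\}$. The Delsarte dual is $\mathcal C^\perp=\{f\in\mathcal L_{n,q}\colon b(f,g)=0\ \forall g\in\mathcal C\}$, where $b(f,g)=\mathrm{Tr}_{q^n/q}\big(\sum_{i=0}^{n-1}f_ig_i\big)$ and $\mathrm{Tr}_{q^n/q}(x)=x+x^{[1]}+\cdots+x^{[n-1]}$. For a code $\mathcal C$, $h(\mathcal C):=\max\{\dim(\mathcal C\cap\mathcal C^{[j]})\colon j=1,\ldots,n-1,\ \gcd(j,n)=1\}$. *)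

From HB Require Import structures.
From mathcomp Require Import all_boot all_order all_algebra.
Set Implicit Arguments. Unset Strict Implicit. Unset Printing Implicit Defensive.
Import GRing.Theory.
Local Open Scope ring_scope.

(* L plays the role of F_{q^n}; a linearized polynomial
   f = sum_{i<n} f_i x^[i] is represented by its coefficient row vector
   (f_0,...,f_{n-1}) : 'rV[L]_n.  F_{q^n}-linear codes are L-subspaces
   {vspace 'rV[L]_n}. *)

Section LinPoly.
Variables (L : finFieldType) (q n : nat).

Definition trq (x : L) : L := \sum_(i < n) x ^+ (q ^ i).

Definition bform (f g : 'rV[L]_n) : L := trq (\sum_(i < n) f 0 i * g 0 i).

(* f^[j] = sum_i f_i^[j] x^[(i+j) mod n]: the coefficient at position k is
   the (unique) f_i^[j] with (i + j) mod n = k. *)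
Definition frobc (j : nat) (f : 'rV[L]_n) : 'rV[L]_n :=
  \row_(k < n) \sum_(i < n | ((i + j) %% n)%N == k) f 0 i ^+ (q ^ j).

Definition conjc (C : {vspace 'rV[L]_n}) (j : nat) : {vspace 'rV[L]_n} :=
  <<[seq frobc j f | f <- enum 'rV[L]_n & f \in C]>>%VS.

Definition ddual (C : {vspace 'rV[L]_n}) : {vspace 'rV[L]_n} :=
  <<[seq f <- enum 'rV[L]_n |
      [forall g : 'rV[L]_n, (g \in C) ==> (bform f g == 0 :> L)%R]]>>%VS.

Definition hinv (C : {vspace 'rV[L]_n}) : nat :=
  \max_(j < n | (0 < j)%N && coprime j n) \dim (C :&: conjc C j).

End LinPoly.

From HB Require Import structures.
From mathcomp Require Import all_boot all_order all_algebra all_field.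
Import GRing.Theory.
Local Open Scope ring_scope.

Set Implicit Arguments. Unset Strict Implicit. Unset Printing Implicit Defensive.

(* Write f.g for the coordinatewise dot product, so that b(f, g) = Tr(f.g).
   As the trace form is nondegenerate, the Delsarte dual of C is its
   orthogonal for the dot product, of dimension n - dim C.  The twist
   f |-> f^[j] is a semilinear bijection with f^[j].g^[j] = (f.g)^[j], so it
   commutes with taking orthogonals and preserves dimensions.  Hence
   C^perp cap (C^perp)^[j] = (C + C^[j])^perp has dimension
   n - 2k + dim (C cap C^[j]) for every j, and h(C^perp) = n - 2k + h(C)
   follows by taking maxima. *)

Lemma span_ind (K : fieldType) (vT : vectType K) (P : vT -> Prop) (X : seq vT) :
  P 0 -> (forall u v, P u -> P v -> P (u + v)) ->
  (forall a v, P v -> P (a *: v)) -> {in X, forall v, P v} ->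
  forall v, v \in <<X>>%VS -> P v.
Proof.
move=> P0 PD PZ PX v /(@coord_span _ _ _ (in_tuple X)) ->.
by elim/big_ind: _ => // i _; apply/PZ/PX/mem_nth.
Qed.

Lemma bigmax_addr (I : finType) (P : pred I) (F : I -> nat) c i0 : P i0 ->
  (\max_(i | P i) (F i + c) = \max_(i | P i) F i + c)%N.
Proof.
move=> Pi0; apply/eqP; rewrite eqn_leq; apply/andP; split.
  by apply/bigmax_leqP => i Pi; rewrite leq_add2r leq_bigmax_cond.
rewrite (bigmax_eq_arg i0 Pi0); case: arg_maxnP => // i Pi _.
exact: (leq_bigmax_cond (F := fun i => F i + c)).
Qed.

Section Dot.
Variables (R : comNzRingType) (m : nat).
Implicit Types f g : 'rV[R]_m.

Definition dot f g : R := \sum_(i < m) f 0 i * g 0 i.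

Lemma dotDr f g h : dot f (g + h) = dot f g + dot f h.
Proof. by rewrite /dot -big_split; apply: eq_bigr => i _; rewrite mxE mulrDr. Qed.

Lemma dotZr a f g : dot f (a *: g) = a * dot f g.
Proof. by rewrite /dot mulr_sumr; apply: eq_bigr => i _; rewrite mxE mulrCA. Qed.

Lemma dot0r f : dot f 0 = 0.
Proof. by rewrite /dot big1 // => i _; rewrite mxE mulr0. Qed.

Lemma dot_sumr (I : finType) (G : I -> 'rV[R]_m) f :
  dot f (\sum_i G i) = \sum_i dot f (G i).
Proof. by apply: (big_morph (dot f)) => [g h|]; rewrite ?dotDr ?dot0r. Qed.

Lemma dot_eq0r g : (forall f, dot f g = 0) -> g = 0.
Proof.
move=> g_perp; apply/rowP => j; rewrite mxE -(g_perp (delta_mx 0 j)) /dot.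
rewrite (bigD1 j) //= big1 ?addr0 => [|i ij]; rewrite !mxE ?eqxx ?mul1r //.
by rewrite (negbTE ij) mul0r.
Qed.

End Dot.

Section Orthogonal.
Variable K : fieldType.

Definition dot_basis m (D : {vspace 'rV[K]_m}) : 'Hom('rV[K]_m, 'rV[K]_(\dim D)) :=
  linfun (mulmxr (\matrix_(j, i) (vbasis D)`_i 0 j)).

Definition orthv m (D : {vspace 'rV[K]_m}) := lker (dot_basis D).

Lemma dot_basisE m (D : {vspace 'rV[K]_m}) f :
  dot_basis D f = \row_i dot f (vbasis D)`_i.
Proof. by apply/rowP => i; rewrite lfunE !mxE; apply: eq_bigr => j _; rewrite mxE. Qed.

Lemma orthvP m (D : {vspace 'rV[K]_m}) f :
  reflect {in D, forall g, dot f g = 0} (f \in orthv D).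
Proof.
rewrite memv_ker dot_basisE; apply: (iffP eqP) => [f_perp g gD | f_perp].
  rewrite (coord_vbasis gD) dot_sumr big1 // => i _.
  by rewrite dotZr; move/rowP: f_perp => /(_ i); rewrite !mxE => ->; rewrite mulr0.
by apply/rowP => i; rewrite !mxE f_perp ?vbasis_mem ?mem_nth ?size_tuple.
Qed.

Lemma dimvf_rV d : \dim (fullv : {vspace 'rV[K]_d}) = d.
Proof. by rewrite dimvf dim_matrix mul1r. Qed.

Lemma dim_orthv_ge m (D : {vspace 'rV[K]_m}) : (m <= \dim (orthv D) + \dim D)%N.
Proof.
have := limg_ker_dim (dot_basis D) fullv; rewrite capfv dimvf_rV => {1}<-.
by rewrite leq_add2l -[leqRHS]dimvf_rV dimvS ?subvf.
Qed.

Lemma orthv_eq0 m (U : {vspace 'rV[K]_m}) : orthv U = 0%VS -> U = fullv.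
Proof.
move=> U_perp0; apply/eqP; rewrite eqEdim subvf /=.
by have := dim_orthv_ge U; rewrite U_perp0 dimv0 dimvf_rV.
Qed.

(* The image has trivial orthogonal because the basis of [D] is free. *)
Lemma limg_dot_basis m (D : {vspace 'rV[K]_m}) : limg (dot_basis D) = fullv.
Proof.
apply: orthv_eq0; apply/eqP; rewrite -subv0; apply/subvP => c /orthvP c_perp.
rewrite memv0; pose w := \sum_i c 0 i *: (vbasis D)`_i.
have w0 : w = 0.
  apply: dot_eq0r => f; rewrite dot_sumr -[RHS](c_perp _ (memv_img _ (memvf f))).
  by rewrite dot_basisE [in RHS]/dot; apply: eq_bigr => i _; rewrite dotZr mxE.
apply/eqP/rowP => i; rewrite mxE.
by move/freeP: (basis_free (vbasisP D)) => /(_ (fun i => c 0 i) w0).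
Qed.

Lemma dim_orthv m (D : {vspace 'rV[K]_m}) : (\dim (orthv D) + \dim D)%N = m.
Proof.
have := limg_ker_dim (dot_basis D) fullv.
by rewrite capfv limg_dot_basis !dimvf_rV.
Qed.

Lemma orthvD m (U V : {vspace 'rV[K]_m}) : orthv (U + V) = (orthv U :&: orthv V)%VS.
Proof.
apply/vspaceP => f; rewrite memv_cap.
apply/orthvP/andP => [f_perp | [/orthvP fU /orthvP fV]].
  by split; apply/orthvP => g g_in; apply: f_perp;
    rewrite (subvP _ _ g_in) ?addvSl ?addvSr.
by move=> _ /memv_addP [u uU [v vV ->]]; rewrite dotDr fU ?fV ?addr0.
Qed.

End Orthogonal.

Section Twist.
Variables (L : finFieldType) (q n : nat).
Hypotheses (q_pchar : [pchar L].-nat q) (n_gt0 : (0 < n)%N).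
Implicit Types (f g : 'rV[L]_n) (C D : {vspace 'rV[L]_n}).

Let q_gt0 : (0 < q)%N. Proof. by case/andP: q_pchar. Qed.

Definition frob j (x : L) := x ^+ (q ^ j).

Lemma frobD j x y : frob j (x + y) = frob j x + frob j y.
Proof. by rewrite /frob exprDn_pchar // pnatX q_pchar. Qed.

Lemma frobM j x y : frob j (x * y) = frob j x * frob j y.
Proof. exact: exprMn. Qed.

Lemma frob_eq0 j x : (frob j x == 0) = (x == 0).
Proof. by rewrite /frob expf_eq0 expn_gt0 q_gt0. Qed.

Lemma frob0 j : frob j 0 = 0.
Proof. by apply/eqP; rewrite frob_eq0. Qed.

Lemma frob_inj j : injective (frob j).
Proof.
move=> x y frob_xy; apply/eqP; rewrite -subr_eq0 -(frob_eq0 j); apply/eqP.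
by apply: (addIr (frob j y)); rewrite -frobD subrK add0r frob_xy.
Qed.

Lemma frob_sum j (I : finType) (F : I -> L) :
  frob j (\sum_i F i) = \sum_i frob j (F i).
Proof. exact: (big_morph (frob j) (frobD j) (frob0 j)). Qed.

Definition shift j (i : 'I_n) : 'I_n := Ordinal (ltn_pmod (i + j) n_gt0).

Lemma shift_inj j : injective (shift j).
Proof.
move=> i i' /(congr1 val) /eqP /=; rewrite eqn_modDr !modn_small //.
by move/eqP/val_inj.
Qed.

Lemma frobcE j f i : frobc q j f 0 (shift j i) = frob j (f 0 i).
Proof.
rewrite mxE (big_pred1 i) // => i' /=.
by rewrite -[_ == _ :> nat]/(shift j i' == shift j i) (inj_eq (@shift_inj j)).
Qed.

Lemma frobc_ext j f g :
  (forall i, g 0 (shift j i) = frob j (f 0 i)) -> frobc q j f = g.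
Proof.
move=> gE; apply/rowP => k; have [s _ sK] := injF_bij (@shift_inj j).
by rewrite -[k]sK frobcE gE.
Qed.

Lemma frobcD j f g : frobc q j (f + g) = frobc q j f + frobc q j g.
Proof. by apply: frobc_ext => i; rewrite [LHS]mxE !frobcE mxE frobD. Qed.

Lemma frobcZ j a f : frobc q j (a *: f) = frob j a *: frobc q j f.
Proof. by apply: frobc_ext => i; rewrite [LHS]mxE !frobcE mxE frobM. Qed.

Lemma frobc0 j : frobc q j 0 = 0 :> 'rV[L]_n.
Proof. by apply: frobc_ext => i; rewrite !mxE frob0. Qed.

Lemma frobc_sum j (I : finType) (F : I -> 'rV[L]_n) :
  frobc q j (\sum_i F i) = \sum_i frobc q j (F i).
Proof. exact: (big_morph (frobc q j) (frobcD j) (frobc0 j)). Qed.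

Lemma frobc_inj j : injective (@frobc L q n j).
Proof.
by move=> f g fg; apply/rowP => i; apply: (@frob_inj j); rewrite -!frobcE fg.
Qed.

Lemma dot_frobc j f g : dot (frobc q j f) (frobc q j g) = frob j (dot f g).
Proof.
rewrite /dot (reindex_inj (@shift_inj j)) frob_sum.
by apply: eq_bigr => i _; rewrite !frobcE frobM.
Qed.

Lemma conjcP C j f :
  reflect (exists2 g, g \in C & f = frobc q j g) (f \in conjc q C j).
Proof.
apply: (iffP idP) => [|[g gC ->]]; last first.
  by apply/memv_span/map_f; rewrite mem_filter gC mem_enum.
apply: (span_ind (P := fun f => exists2 g, g \in C & f = frobc q j g))
  => [|u v [g gC ->] [h hC ->]|a u [g gC ->]|u /mapP[g]].
- by exists 0; rewrite ?mem0v ?frobc0.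
- by exists (g + h); rewrite ?memvD ?frobcD.
- have [b _ bK] := injF_bij (@frob_inj j).
  by exists (b a *: g); rewrite ?memvZ // frobcZ bK.
- by rewrite mem_filter mem_enum andbT => gC ->; exists g.
Qed.

Lemma orthv_conjc C j : orthv (conjc q C j) = conjc q (orthv C) j.
Proof.
apply/vspaceP => f; apply/orthvP/conjcP => [f_perp | [g /orthvP g_perp ->]].
  have [s _ sK] := injF_bij (@frobc_inj j); rewrite -[f]sK in f_perp *.
  exists (s f) => //; apply/orthvP => c cC; apply: (@frob_inj j).
  by rewrite -dot_frobc frob0 f_perp //; apply/conjcP; exists c.
by move=> _ /conjcP[c cC ->]; rewrite dot_frobc g_perp ?frob0.
Qed.

Lemma dim_conjc_le C j : (\dim (conjc q C j) <= \dim C)%N.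
Proof.
have sub_span : (conjc q C j <= <<map (frobc q j) (vbasis C)>>)%VS.
  apply/subvP => _ /conjcP[g gC ->].
  rewrite (coord_vbasis gC) frobc_sum; apply: memv_suml => i _.
  by rewrite frobcZ memvZ // memv_span // map_f // mem_nth ?size_tuple.
apply: leq_trans (dimvS sub_span) _; apply: leq_trans (dim_span _) _.
by rewrite size_map size_tuple.
Qed.

(* The reverse inequality is the same one for the orthogonals, by [orthv_conjc]. *)
Lemma dim_conjc C j : \dim (conjc q C j) = \dim C.
Proof.
apply/eqP; rewrite eqn_leq dim_conjc_le -(leq_add2l (\dim (orthv C))) dim_orthv.
rewrite -[X in (X <= _)%N](dim_orthv (conjc q C j)) orthv_conjc.
by rewrite leq_add2r dim_conjc_le.
Qed.

Lemma dim_orthv_cap_conjc C j :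
  (\dim (orthv C :&: conjc q (orthv C) j) + 2 * \dim C =
   \dim (C :&: conjc q C j) + n)%N.
Proof.
have sum_cap := dimv_sum_cap C (conjc q C j); rewrite dim_conjc in sum_cap.
rewrite -orthv_conjc -orthvD -[X in _ = _ + X](dim_orthv (C + conjc q C j)).
by rewrite mul2n -addnn -sum_cap addnA addnC.
Qed.

End Twist.

Section Trace.
Variables (L : finFieldType) (q n : nat).
Hypotheses (q_gt1 : (1 < q)%N) (n_gt0 : (0 < n)%N) (card_L : #|L| = (q ^ n)%N).

(* [trq] is evaluation of a nonzero polynomial of degree [q ^ n.-1 < #|L|]. *)
Lemma trq_neq0 : exists x : L, trq q n x != 0.
Proof.
pose P : {poly L} := \sum_(i < n) 'X^(q ^ i).
have coefP m : P`_m = \sum_(i < n) ((m == q ^ i)%N%:R : L).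
  by rewrite coef_sum; apply: eq_bigr => i _; rewrite coefXn.
have top : (n.-1 < n)%N by rewrite ltn_predL.
have P_neq0 : P != 0.
  apply/eqP => /(congr1 (fun p : {poly L} => p`_(q ^ n.-1))) /eqP.
  rewrite coefP coef0 (bigD1 (Ordinal top)) //= eqxx big1 ?addr0 ?oner_eq0 // => i.
  rewrite eqn_exp2l // => /eqP i_neq; case: eqP => // top_i.
  by case: i_neq; apply: val_inj; rewrite /= top_i.
have size_P : (size P <= (q ^ n.-1).+1)%N.
  apply/leq_sizeP => m m_big; rewrite coefP big1 // => i _; case: eqP => // m_i.
  by move: m_big; rewrite m_i ltn_exp2l // prednK // leqNgt ltn_ord.
have /allPn[x _ Px] : ~~ all (root P) (enum L).
  apply: contraL size_P => all_roots; rewrite -ltnNge.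
  apply: leq_trans (max_poly_roots P_neq0 all_roots (enum_uniq L)).
  by rewrite -cardE card_L ltnS ltn_exp2l.
by exists x; move: Px; rewrite /root horner_sum; under eq_bigr do rewrite hornerXn.
Qed.

Lemma trq_nondeg (x : L) : (forall a, trq q n (a * x) = 0) -> x = 0.
Proof.
move=> x_perp; apply/eqP; apply: contraT => x_neq0.
have [y /eqP[]] := trq_neq0.
by rewrite -(x_perp (y / x)) mulfVK.
Qed.

Lemma trq0 : trq q n (0 : L) = 0.
Proof.
by rewrite /trq big1 // => i _; rewrite expr0n expn_eq0 (gtn_eqF (ltnW q_gt1)).
Qed.

Lemma ddual_orthv (D : {vspace 'rV[L]_n}) : ddual q D = orthv D.
Proof.
apply/eqP; rewrite eqEsubv; apply/andP; split.
  apply/span_subvP => f; rewrite mem_filter => /andP[/forallP f_perp _].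
  apply/orthvP => g gD; apply: trq_nondeg => a; rewrite -dotZr.
  exact/eqP/(implyP (f_perp _))/memvZ.
apply/subvP => f /orthvP f_perp; apply/memv_span; rewrite mem_filter mem_enum andbT.
by apply/forallP => g; apply/implyP => gD; rewrite /bform -/(dot f g) f_perp ?trq0.
Qed.

End Trace.

Theorem proposition4p1 (L : finFieldType) (q n : nat)
    (hq : exists p e : nat, prime p /\ q = (p ^ e.+1)%N)
    (hn : (0 < n)%N) (hL : #|L| = (q ^ n)%N)
    (C : {vspace 'rV[L]_n}) (k : nat) (hk : \dim C = k) :
  (forall i : 'I_n, ddual q (conjc q C i) = conjc q (ddual q C) i) /\
  ((1 < n)%N ->
     ((hinv q (ddual q C))%:Z = n%:Z - 2%:Z * k%:Z + (hinv q C)%:Z)%R).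
Proof.
have [p [e [p_prime q_def]]] := hq.
have q_pchar : [pchar L].-nat q.
  rewrite q_def pnatX pnatE // (@card_finPcharP _ _ (e.+1 * n)) //.
  by rewrite hL q_def expnM.
have q_gt1 : (1 < q)%N.
  rewrite q_def (leq_trans (prime_gt1 p_prime)) //.
  by rewrite -{1}(expn1 p) leq_exp2l ?prime_gt1.
have ddualE := ddual_orthv q_gt1 hn hL.
split=> [i | n_gt1]; first by rewrite !ddualE orthv_conjc.
pose P (j : 'I_n) := (0 < j)%N && coprime j n.
have P1 : P (Ordinal n_gt1) by rewrite /P coprime1n.
have max_eq : (\max_(j < n | (0 < j) && coprime j n)
      (\dim (orthv C :&: conjc q (orthv C) j) + 2 * \dim C) =
    \max_(j < n | (0 < j) && coprime j n) (\dim (C :&: conjc q C j) + n))%N.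
  by apply: eq_bigr => j _; apply: dim_orthv_cap_conjc.
rewrite !(bigmax_addr _ _ P1) in max_eq.
rewrite /hinv ddualE -hk; apply: (addIr (2 * \dim C)%:Z).
by rewrite -PoszD max_eq PoszD PoszM addrAC subrK addrC.
Qed.
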